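(* Let $N,K,N_0$ be positive integers with $N=KN_0$. Consider ordered $K$-tuples $(\boldsymbol\zeta_1,\dots,\boldsymbol\zeta_K)$, where each $\boldsymbol\zeta_k=(\boldsymbol\zeta_k[1]<\dots<\boldsymbol\zeta_k[N_0])$ is an increasing vector of elements of $\{1,\dots,N\}$, the sets $\{\boldsymbol\zeta_k[n]\}_n$ are pairwise disjoint, and which satisfy the translation constraint $$\boldsymbol\zeta_k[n]=\boldsymbol\zeta_{k'}[n]+\eta_{k,k'}\quad\text{for all } n\in\{1,\dots,N_0\},\ k\neq k',$$ for some nonzero integer constants $\eta_{k,k'}$. For each $k$ let $\mathrm{var}(\boldsymbol\zeta_k)=\frac1{N_0}\sum_n\boldsymbol\zeta_k[n]^2-\frac1{N_0^2}\big(\sum_n\boldsymbol\zeta_k[n]\big)^2$. Then, among all such tuples, $\min_k \mathrm{var}(\boldsymbol\zeta_k)$ is maximized when $\eta_{k,k'}=k-k'$ for all $k\ne k'$, i.e. by the interleaved distribution $\boldsymbol\zeta_k[n]=k+(n-1)K$.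
   Context: $\boldsymbol\zeta_k$ is the vector of subcarrier indices assigned to user $k$ in an OFDMA system with $N$ subcarriers labeled $1,\dots,N$ and $K$ users, each subcarrier used by at most one user, each user receiving $N_0$ subcarriers. The interleaved distribution assigns to user $k$ the subcarriers $k, k+K, k+2K,\dots,k+(N_0-1)K$. *)

From mathcomp Require Import all_boot all_order all_algebra.
Set Implicit Arguments. Unset Strict Implicit. Unset Printing Implicit Defensive.
Import Order.TTheory GRing.Theory Num.Theory.
Local Open Scope ring_scope.

(* An allocation is zeta : nat -> nat -> nat, where zeta k n is the paper's
   zeta_k[n], meaningful for users 1 <= k <= K and positions 1 <= n <= N0
   (1-based indices, as in the paper). Values outside that range are ignored. *)

Definition admissible (N K N0 : nat) (zeta : nat -> nat -> nat) : Prop :=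
  [/\
      (forall k n, (1 <= k <= K)%N -> (1 <= n <= N0)%N ->
         (1 <= zeta k n <= N)%N),
      (forall k n m, (1 <= k <= K)%N -> (1 <= n)%N -> (n < m)%N -> (m <= N0)%N ->
         (zeta k n < zeta k m)%N),
      (forall k k' n m, (1 <= k <= K)%N -> (1 <= k' <= K)%N -> k != k' ->
         (1 <= n <= N0)%N -> (1 <= m <= N0)%N -> zeta k n != zeta k' m) &
      (forall k k', (1 <= k <= K)%N -> (1 <= k' <= K)%N -> k != k' ->
         exists eta : int, eta != 0 /\
           forall n, (1 <= n <= N0)%N ->
             ((zeta k n)%:Z = (zeta k' n)%:Z + eta)%R)].

Definition var (N0 : nat) (zk : nat -> nat) : rat :=
  (N0%:R)^-1 * (\sum_(1 <= n < N0.+1) ((zk n)%:R) ^+ 2)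
  - (N0%:R ^+ 2)^-1 * (\sum_(1 <= n < N0.+1) (zk n)%:R) ^+ 2.

Definition minvar (K N0 : nat) (zeta : nat -> nat -> nat) : rat :=
  \big[Num.min/var N0 (zeta 1%N)]_(1 <= k < K.+1) var N0 (zeta k).

Definition interleaved (K : nat) : nat -> nat -> nat :=
  fun k n => (k + (n - 1) * K)%N.

From mathcomp Require Import all_boot all_order all_algebra zify ring lra.
Import Order.TTheory GRing.Theory Num.Theory.
Local Open Scope ring_scope.

(* Every zeta_k is the translate of zeta_1 by its offset, so all users share the
   variance of zeta_1; since the zeta_k partition {1, ..., N}, the law of total
   variance gives var(zeta_1) = var(1, ..., N) - spread(offsets) / (2 K^2),
   where spread is the sum of all squared pairwise differences.  The K offsets
   are distinct integers: once sorted, the i-th and j-th differ by at least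
   |i - j|, so their spread is at least that of 0, ..., K-1, which are exactly
   the offsets of the interleaved distribution. *)

Definition spread (s : seq int) : int := \sum_(a <- s) \sum_(b <- s) (a - b) ^+ 2.

Lemma perm_spread {s t : seq int} : perm_eq s t -> spread s = spread t.
Proof.
by move=> st; rewrite /spread (perm_big _ st); apply: eq_bigr => a _; rewrite (perm_big _ st).
Qed.

Lemma sorted_lt_nth_gap {s : seq int} {i j : nat} :
  sorted <%R s -> (i <= j)%N -> (j < size s)%N -> j%:Z - i%:Z <= s`_j - s`_i.
Proof.
move=> lt_s; elim: j => [|j IHj] le_ij lt_js.
  by rewrite leqn0 in le_ij; rewrite (eqP le_ij) !subrr.
case: (eqVneq i j.+1) => [->|ne_ij]; first by rewrite !subrr.
have lt_j : s`_j < s`_j.+1 by rewrite (lt_sorted_ltn_nth 0 lt_s) ?inE // ltnW.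
have le_ij' : (i <= j)%N by rewrite -ltnS ltn_neqAle ne_ij.
have := IHj le_ij' (ltnW lt_js); rewrite -lezD1 in lt_j.
by rewrite intS; lra.
Qed.

Lemma sorted_lt_nth_sqr_dist (s : seq int) i j : sorted <%R s ->
  (i < size s)%N -> (j < size s)%N -> (i%:Z - j%:Z) ^+ 2 <= (s`_i - s`_j) ^+ 2.
Proof.
move=> lt_s lt_is lt_js; wlog le_ij : i j lt_is lt_js / (i <= j)%N.
  move=> sym; case: (leqP i j) => [|/ltnW] le; first exact: sym.
  by rewrite -sqrrN -[(s`_i - s`_j) ^+ 2]sqrrN !opprB; apply: sym.
have := sorted_lt_nth_gap lt_s le_ij lt_js.
rewrite -sqrrN -[(s`_i - s`_j) ^+ 2]sqrrN !opprB => gap.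
have ij_ge0 : 0 <= j%:Z - i%:Z by rewrite subr_ge0 lez_nat.
by rewrite ler_sqr ?nnegrE //; lra.
Qed.

Lemma spread_iota_le (s : seq int) : uniq s ->
  spread [seq i%:Z | i <- iota 0 (size s)] <= spread s.
Proof.
rewrite -sort_lt_sorted => lt_s.
rewrite -(perm_spread (permEl (perm_sort <=%R s))) -(size_sort <=%R s).
rewrite /spread big_map [X in _ <= X](big_nth 0) /index_iota subn0 !big_seq.
apply: ler_sum => i; rewrite mem_iota => lt_i.
rewrite big_map [X in _ <= X](big_nth 0) /index_iota subn0 !big_seq.
apply: ler_sum => j; rewrite mem_iota => lt_j.
exact: sorted_lt_nth_sqr_dist.
Qed.

Section SumMoments.
Variables (R : comPzRingType) (I : Type) (r : seq I).

Lemma sumr_const_seq (x : R) : \sum_(i <- r) x = (size r)%:R * x.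
Proof. by rewrite big_const_seq count_predT iter_addr_0 mulr_natl. Qed.

Lemma sumrD_const (F : I -> R) (x : R) :
  \sum_(i <- r) (F i + x) = \sum_(i <- r) F i + (size r)%:R * x.
Proof. by rewrite big_split sumr_const_seq. Qed.

Lemma sumr_sqrD_const (F : I -> R) (x : R) :
  \sum_(i <- r) (F i + x) ^+ 2 =
  \sum_(i <- r) F i ^+ 2 + 2 * x * \sum_(i <- r) F i + (size r)%:R * x ^+ 2.
Proof.
under eq_bigr do rewrite sqrrD.
by rewrite !big_split /= -mulr_natr -mulr_suml sumr_const_seq; ring.
Qed.

Lemma sumr_sum_sqrB (F : I -> R) :
  \sum_(i <- r) \sum_(j <- r) (F i - F j) ^+ 2 =
  2 * ((size r)%:R * \sum_(i <- r) F i ^+ 2 - (\sum_(i <- r) F i) ^+ 2).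
Proof.
under eq_bigr do under eq_bigr do rewrite -sqrrN opprB.
under eq_bigr do rewrite sumr_sqrD_const sqrrN.
by rewrite !big_split /= -mulr_suml -!mulr_sumr sumrN sumr_const_seq; ring.
Qed.

End SumMoments.

Definition offset (zeta : nat -> nat -> nat) (k : nat) : int :=
  (zeta k 1%N)%:Z - (zeta 1%N 1%N)%:Z.

Definition offsets (zeta : nat -> nat -> nat) (K : nat) : seq int :=
  [seq offset zeta k | k <- index_iota 1 K.+1].

Lemma size_index_iota1 (n : nat) : size (index_iota 1 n.+1) = n.
Proof. by rewrite size_iota subn1. Qed.

Lemma var_translate (N0 : nat) (f g : nat -> nat) (c : rat) :
  (forall n, (1 <= n <= N0)%N -> (f n)%:R = (g n)%:R + c) -> var N0 f = var N0 g.
Proof.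
move=> fE; rewrite /var.
under eq_big_nat => n n_in do rewrite fE //.
under [X in _ - _ * X ^+ 2]eq_big_nat => n n_in do rewrite fE //.
rewrite sumrD_const sumr_sqrD_const size_index_iota1.
have [->|N0_gt0] := posnP N0; first by rewrite expr0n invr0 !mul0r.
by field; rewrite pnatr_eq0 -lt0n.
Qed.

Section Admissible.
Context {N K N0 : nat} {zeta : nat -> nat -> nat} (adm : admissible N K N0 zeta).

Lemma admissible_offset k n : (1 <= k <= K)%N -> (1 <= n <= N0)%N ->
  (zeta k n)%:Z = (zeta 1%N n)%:Z + offset zeta k.
Proof.
case: adm => _ _ _ transl /andP[k_ge1 k_le] /andP[n_ge1 n_le].
case: (eqVneq k 1%N) => [->|ne_k1]; first by rewrite /offset subrr addr0.
have [eta [_ eta_transl]] := transl k 1%N ltac:(lia) ltac:(lia) ne_k1.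
have N0_ge1 : (1 <= N0)%N := leq_trans n_ge1 n_le.
by rewrite /offset !eta_transl ?n_ge1 ?n_le ?leqnn ?N0_ge1 //; ring.
Qed.

Lemma admissible_offset_natr (R : pzRingType) k n :
  (1 <= k <= K)%N -> (1 <= n <= N0)%N ->
  (zeta k n)%:R = (zeta 1%N n)%:R + (offset zeta k)%:~R :> R.
Proof.
move=> k_in n_in; move/(congr1 (intmul (1 : R))): (admissible_offset k n k_in n_in).
by rewrite intrD.
Qed.

Lemma uniq_offsets : (0 < N0)%N -> uniq (offsets zeta K).
Proof.
case: adm => _ _ disj _ N0_gt0.
rewrite map_inj_in_uniq ?iota_uniq // => k k'; rewrite !mem_index_iota => k_in k'_in.
move/addIr/eqP; rewrite eqz_nat; apply: contraTeq => ne_kk'.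
by apply: disj; rewrite ?leqnn //; lia.
Qed.

Lemma admissible_inj k k' n m : (1 <= k <= K)%N -> (1 <= k' <= K)%N ->
  (1 <= n <= N0)%N -> (1 <= m <= N0)%N -> zeta k n = zeta k' m -> k = k' /\ n = m.
Proof.
case: adm => _ incr disj _ k_in k'_in n_in m_in eq_z.
case: (eqVneq k k') => [eq_kk'|ne_kk'].
  subst k'; split=> //; case: (ltngtP n m) => // [lt_nm|lt_mn].
  - by have := incr k n m; rewrite eq_z ltnn => /(_ _ _ lt_nm) /=; lia.
  - by have := incr k m n; rewrite eq_z ltnn => /(_ _ _ lt_mn) /=; lia.
by have := disj k k' n m k_in k'_in ne_kk' n_in m_in; rewrite eq_z eqxx.
Qed.

Lemma admissible_perm_iota : N = (K * N0)%N ->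
  perm_eq [seq zeta k n | k <- index_iota 1 K.+1, n <- index_iota 1 N0.+1]
          (index_iota 1 N.+1).
Proof.
case: adm => range _ _ _ NE; set zs := [seq zeta k n | k <- _, n <- _].
have uniq_zs : uniq zs.
  apply: allpairs_uniq; rewrite ?iota_uniq //.
  move=> [k n] [k' m] /allpairsP[[a b] /= [a_in b_in [-> ->]]].
  move=> /allpairsP[[a' b'] /= [a'_in b'_in [-> ->]]] /= eq_z.
  move: a_in b_in a'_in b'_in; rewrite !mem_index_iota => *.
  by have [-> ->] := admissible_inj a a' b b' ltac:(lia) ltac:(lia) ltac:(lia) ltac:(lia) eq_z.
have sub_zs : {subset zs <= index_iota 1 N.+1}.
  move=> x /allpairsP[[k n] /= [k_in n_in ->]].
  move: k_in n_in; rewrite !mem_index_iota => k_in n_in.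
  by have := range k n ltac:(lia) ltac:(lia); lia.
have size_zs : (size (index_iota 1 N.+1) <= size zs)%N.
  by rewrite size_allpairs !size_index_iota1 NE.
have [_ eq_zs] := uniq_min_size uniq_zs sub_zs size_zs.
by apply: uniq_perm; rewrite ?iota_uniq.
Qed.

Lemma minvar_admissible : minvar K N0 zeta = var N0 (zeta 1%N).
Proof.
rewrite /minvar big_seq; apply: (big_ind (eq^~ _)) => // [x y -> ->|k]; first exact: minxx.
rewrite mem_index_iota => k_in; apply: (var_translate _ _ _ (offset zeta k)%:~R) => n n_in.
by apply: admissible_offset_natr; lia.
Qed.

Lemma var_admissible : (0 < K)%N -> (0 < N0)%N -> N = (K * N0)%N ->
  var N0 (zeta 1%N) = var N id - (spread (offsets zeta K))%:~R / (2 * K%:R ^+ 2).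
Proof.
move=> K_gt0 N0_gt0 NE.
pose a n : rat := (zeta 1%N n)%:R; pose c k : rat := (offset zeta k)%:~R.
have sum_part (F : nat -> rat) : \sum_(1 <= x < N.+1) F x =
    \sum_(1 <= k < K.+1) \sum_(1 <= n < N0.+1) F (zeta k n).
  by rewrite -(perm_big _ (admissible_perm_iota NE)) big_allpairs_dep.
have zetaE k n : (1 <= k < K.+1)%N -> (1 <= n < N0.+1)%N -> (zeta k n)%:R = a n + c k.
  by move=> k_in n_in; apply: admissible_offset_natr.
have sum1 : \sum_(1 <= x < N.+1) x%:R =
    K%:R * \sum_(1 <= n < N0.+1) a n + N0%:R * \sum_(1 <= k < K.+1) c k.
  rewrite sum_part.
  under eq_big_nat => k k_in do under eq_big_nat => n n_in do rewrite zetaE //.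
  under eq_bigr do rewrite sumrD_const.
  by rewrite big_split sumr_const_seq -mulr_sumr !size_index_iota1.
have sum2 : \sum_(1 <= x < N.+1) x%:R ^+ 2 =
    K%:R * \sum_(1 <= n < N0.+1) a n ^+ 2
    + 2 * (\sum_(1 <= n < N0.+1) a n) * (\sum_(1 <= k < K.+1) c k)
    + N0%:R * \sum_(1 <= k < K.+1) c k ^+ 2.
  rewrite sum_part.
  under eq_big_nat => k k_in do under eq_big_nat => n n_in do rewrite zetaE //.
  under eq_bigr do rewrite sumr_sqrD_const.
  by rewrite !big_split /= -mulr_suml -!mulr_sumr sumr_const_seq !size_index_iota1; ring.
have spreadE : (spread (offsets zeta K))%:~R =
    2 * (K%:R * \sum_(1 <= k < K.+1) c k ^+ 2 - (\sum_(1 <= k < K.+1) c k) ^+ 2).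
  rewrite /spread big_map rmorph_sum.
  under eq_bigr do rewrite big_map rmorph_sum.
  under eq_bigr do under eq_bigr do rewrite rmorphXn rmorphB.
  by rewrite sumr_sum_sqrB size_index_iota1.
rewrite /var /= sum1 sum2 spreadE NE natrM.
have K_neq0 : K%:R != 0 :> rat by rewrite pnatr_eq0 -lt0n.
have N0_neq0 : N0%:R != 0 :> rat by rewrite pnatr_eq0 -lt0n.
by field; rewrite K_neq0 N0_neq0.
Qed.

End Admissible.

Lemma offsets_interleaved K : offsets (interleaved K) K = [seq i%:Z | i <- iota 0 K].
Proof.
rewrite /offsets /index_iota subn1 /= (iotaDl 1 0) -map_comp.
by apply: eq_map => i; rewrite /= /offset /interleaved subnn mul0n !addn0 PoszD addrC addKr.
Qed.

Lemma admissible_interleaved N K N0 : N = (K * N0)%N -> admissible N K N0 (interleaved K).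
Proof.
move=> NE; rewrite /admissible /interleaved; split.
- move=> k n k_in n_in; subst N; nia.
- move=> k n m k_in n_ge1 lt_nm m_le; nia.
- move=> k k' n m k_in k'_in ne_kk' n_in m_in; apply/eqP => eq_z.
  wlog lt_nm : k k' n m k_in k'_in ne_kk' n_in m_in eq_z / (n < m)%N.
    move=> sym; case: (ltngtP n m) => [lt_nm|lt_mn|eq_nm].
    - exact: (sym k k' n m).
    - by apply: (sym k' k m n); rewrite // eq_sym.
    - by move: eq_z ne_kk'; rewrite eq_nm => /addIn ->; rewrite eqxx.
  have : ((n - 1) * K + K <= (m - 1) * K)%N by rewrite -mulSnr leq_mul //; lia.
  lia.
- move=> k k' k_in k'_in ne_kk'; exists (k%:Z - k'%:Z); split=> [|n n_in].
    by rewrite subr_eq0 eqz_nat.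
  by rewrite !PoszD; ring.
Qed.

Theorem proposition5 (N K N0 : nat) (hK : (0 < K)%N) (hN0 : (0 < N0)%N)
  (hN : N = (K * N0)%N) :
  admissible N K N0 (interleaved K) /\
  (forall zeta : nat -> nat -> nat, admissible N K N0 zeta ->
     minvar K N0 zeta <= minvar K N0 (interleaved K)).
Proof.
have adm_int := admissible_interleaved N K N0 hN.
split=> // zeta adm.
rewrite (minvar_admissible adm) (minvar_admissible adm_int).
rewrite (var_admissible adm) // (var_admissible adm_int) //.
rewrite lerD2l lerN2 ler_wpM2r ?invr_ge0 ?mulr_ge0 ?exprn_ge0 ?ler0n // ler_int.
rewrite offsets_interleaved -[X in iota 0 X](size_index_iota1 K) -(size_map (offset zeta)).
exact/spread_iota_le/(uniq_offsets adm).
Qed.
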